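(* There exists $\varepsilon_0>0$ such that for every $\varepsilon\in(0,\varepsilon_0)$ the following holds. Let $\mathbf{U}$ be the $7\times 7$ matrix $$\mathbf{U}=\begin{pmatrix} 0 & -1 & \varepsilon & -10 & -\tfrac13+\varepsilon & -\tfrac13+\varepsilon & -\tfrac13+\varepsilon\\ \varepsilon & 0 & -1 & -10 & -\tfrac13+\varepsilon & -\tfrac13+\varepsilon & -\tfrac13+\varepsilon\\ -1 & \varepsilon & 0 & -10 & -\tfrac13+\varepsilon & -\tfrac13+\varepsilon & -\tfrac13+\varepsilon\\ -2 & -2 & 2 & 0 & -\tfrac13 & -\tfrac13 & -\tfrac13\\ -\tfrac13 & -\tfrac13 & -\tfrac13 & 10 & 0 & -1 & \varepsilon\\ -\tfrac13 & -\tfrac13 & -\tfrac13 & 10 & \varepsilon & 0 & -1\\ -\tfrac13 & -\tfrac13 & -\tfrac13 & 10 & -1 & \varepsilon & 0 \end{pmatrix},\qquad \bar{\mathbf{U}}=\begin{pmatrix} 0 & -1 & \varepsilon\\ \varepsilon & 0 & -1\\ -1 & \varepsilon & 0\end{pmatrix}.$$ Let $\mathbf{x}(\cdot):\mathbb{R}\to S_7$ be an interior solution (i.e. $x_i(t)>0$ for all $i$ and all $t\in\mathbb{R}$) of the replicator dynamics $\dot x_i=x_i[(\mathbf{U}\mathbf{x})_i-\mathbf{x}\cdot\mathbf{U}\mathbf{x}]$. Set $\lambda(t)=x_1(t)+x_2(t)+x_3(t)$, $\bar x_i=x_i/\lambda$ for $i=1,2,3$, $\bar{\mathbf{x}}=(\bar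 x_1,\bar x_2,\bar x_3)$ and $\bar\tau(t)=\int_0^t\lambda(s)\,ds$. Let $\mathbf{y}(\cdot)$ be the solution of the replicator dynamics $\dot y_i=y_i[(\bar{\mathbf{U}}\mathbf{y})_i-\mathbf{y}\cdot\bar{\mathbf{U}}\mathbf{y}]$ on $S_3$ with $\mathbf{y}(0)=\bar{\mathbf{x}}(0)$. Then $$\dot{\bar x}_i=\lambda\,\bar x_i\big[(\bar{\mathbf{U}}\bar{\mathbf{x}})_i-\bar{\mathbf{x}}\cdot\bar{\mathbf{U}}\bar{\mathbf{x}}\big]\quad (i=1,2,3),$$ and $\bar{\mathbf{x}}(t)=\mathbf{y}(\bar\tau(t))$ for all $t\in\mathbb{R}$.
   Context: $S_n=\{\mathbf{x}\in\mathbb{R}_+^n:\sum_i x_i=1\}$. The paper assumes throughout that $\varepsilon>0$ is ''small enough''. *)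

From Stdlib Require Import Reals Lra.
From Coquelicot Require Import Coquelicot.
Open Scope R_scope.

(* Vectors in R^n are functions nat -> R, components 0..n-1
   (paper index i corresponds to index i-1 here). *)

Definition Umat (eps : R) (i j : nat) : R :=
  match i, j with
  | 0,0 => 0 | 0,1 => -1 | 0,2 => eps | 0,3 => -10
  | 1,0 => eps | 1,1 => 0 | 1,2 => -1 | 1,3 => -10
  | 2,0 => -1 | 2,1 => eps | 2,2 => 0 | 2,3 => -10
  | 0,_ | 1,_ | 2,_ => -1/3 + eps
  | 3,0 => -2 | 3,1 => -2 | 3,2 => 2 | 3,3 => 0 | 3,_ => -1/3
  | 4,3 | 5,3 | 6,3 => 10
  | 4,4 => 0 | 4,5 => -1 | 4,6 => eps
  | 5,4 => eps | 5,5 => 0 | 5,6 => -1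
  | 6,4 => -1 | 6,5 => eps | 6,6 => 0
  | 4,_ | 5,_ | 6,_ => -1/3
  | _,_ => 0
  end.

Definition Ubar (eps : R) (i j : nat) : R :=
  match i, j with
  | 0,0 => 0 | 0,1 => -1 | 0,2 => eps
  | 1,0 => eps | 1,1 => 0 | 1,2 => -1
  | 2,0 => -1 | 2,1 => eps | 2,2 => 0
  | _,_ => 0
  end.

Definition matvec (n : nat) (A : nat -> nat -> R) (v : nat -> R) (i : nat) : R :=
  sum_f_R0 (fun j => A i j * v j) (n - 1).

Definition quad (n : nat) (A : nat -> nat -> R) (v : nat -> R) : R :=
  sum_f_R0 (fun i => v i * matvec n A v i) (n - 1).

Definition in_simplex (n : nat) (v : nat -> R) : Prop :=
  (forall i, (i < n)%nat -> 0 <= v i) /\ sum_f_R0 v (n - 1) = 1.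

Definition replicator_solution (n : nat) (A : nat -> nat -> R) (x : R -> nat -> R) : Prop :=
  forall t i, (i < n)%nat ->
    is_derive (fun s => x s i) t (x t i * (matvec n A (x t) i - quad n A (x t))).

(* The first three rows of U agree with Ubar up to a payoff shift that is the
   same for the three strategies, and such a shift cancels, together with the mean
   payoff, when differentiating the shares x_i / lambda.  Hence xbar solves the
   Ubar replicator equation slowed down by the factor lambda, and so does
   y o taubar, since taubar' = lambda.  The Ubar replicator field is one-sided
   Lipschitz on the simplex, so the squared distance e between these two solutions
   satisfies |e'| <= C e with e(0) = 0, and Gronwall gives e = 0.  Any eps0 <= 1
   works for this step. *)

From Stdlib Require Import Reals Lra Lia.
From Coquelicot Require Import Coquelicot.
Open Scope R_scope.

Definition replicator_field (n : nat) (A : nat -> nat -> R) (v : nat -> R) (i : nat) : R :=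
  v i * (matvec n A v i - quad n A v).

Definition vsub (u v : nat -> R) (i : nat) : R := u i - v i.

Definition dot3 (u v : nat -> R) : R :=
  u 0%nat * v 0%nat + u 1%nat * v 1%nat + u 2%nat * v 2%nat.

Lemma Rabs_lincomb3_le (u0 u1 u2 v0 v1 v2 M : R) :
  Rabs v0 <= M -> Rabs v1 <= M -> Rabs v2 <= M ->
  Rabs (u0 * v0 + u1 * v1 + u2 * v2) <= (Rabs u0 + Rabs u1 + Rabs u2) * M.
Proof.
  intros H0 H1 H2.
  pose proof (Rabs_pos u0); pose proof (Rabs_pos u1); pose proof (Rabs_pos u2).
  eapply Rle_trans; [apply Rabs_triang|].
  eapply Rle_trans; [apply Rplus_le_compat_r, Rabs_triang|].
  rewrite !Rabs_mult.
  pose proof (Rmult_le_compat_l _ _ _ H H0).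
  pose proof (Rmult_le_compat_l _ _ _ H3 H1).
  pose proof (Rmult_le_compat_l _ _ _ H4 H2).
  lra.
Qed.

Lemma Rabs_convex3_le (b0 b1 b2 v0 v1 v2 M : R) :
  0 <= b0 -> 0 <= b1 -> 0 <= b2 -> b0 + b1 + b2 = 1 ->
  Rabs v0 <= M -> Rabs v1 <= M -> Rabs v2 <= M ->
  Rabs (b0 * v0 + b1 * v1 + b2 * v2) <= M.
Proof.
  intros Hb0 Hb1 Hb2 Hb H0 H1 H2.
  pose proof (Rabs_lincomb3_le b0 b1 b2 v0 v1 v2 M H0 H1 H2) as H.
  rewrite (Rabs_pos_eq b0), (Rabs_pos_eq b1), (Rabs_pos_eq b2), Hb in H by assumption.
  lra.
Qed.

Lemma sum_Rabs3_sqr_le (d0 d1 d2 : R) :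
  (Rabs d0 + Rabs d1 + Rabs d2) ^ 2 <= 3 * (d0 ^ 2 + d1 ^ 2 + d2 ^ 2).
Proof.
  rewrite <- (pow2_abs d0), <- (pow2_abs d1), <- (pow2_abs d2).
  pose proof (pow2_ge_0 (Rabs d0 - Rabs d1)); pose proof (pow2_ge_0 (Rabs d1 - Rabs d2));
  pose proof (pow2_ge_0 (Rabs d0 - Rabs d2)).
  nra.
Qed.

Lemma Rabs_mult_le (u v M N : R) : Rabs u <= M -> Rabs v <= N -> Rabs (u * v) <= M * N.
Proof. intros Hu Hv. rewrite Rabs_mult. apply Rmult_le_compat; auto using Rabs_pos. Qed.

Lemma in_simplex3_coords (a : nat -> R) : in_simplex 3 a ->
  0 <= a 0%nat /\ 0 <= a 1%nat /\ 0 <= a 2%nat /\ a 0%nat + a 1%nat + a 2%nat = 1.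
Proof.
  intros [Hnn Hsum]; simpl in Hsum.
  repeat split; try apply Hnn; auto.
Qed.

Section ReplicatorField3.

Variable A : nat -> nat -> R.
Hypothesis A_bounded : forall i j, (i < 3)%nat -> (j < 3)%nat -> Rabs (A i j) <= 1.

Lemma matvec3_simplex_bound (a : nat -> R) (i : nat) :
  in_simplex 3 a -> (i < 3)%nat -> Rabs (matvec 3 A a i) <= 1.
Proof.
  intros Ha Hi. destruct (in_simplex3_coords a Ha) as (H0 & H1 & H2 & Hs).
  unfold matvec; simpl.
  rewrite (Rmult_comm (A i 0%nat)), (Rmult_comm (A i 1%nat)), (Rmult_comm (A i 2%nat)).
  apply Rabs_convex3_le; auto; apply A_bounded; lia.
Qed.

Lemma matvec3_Rabs_le (d : nat -> R) (i : nat) : (i < 3)%nat ->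
  Rabs (matvec 3 A d i) <= Rabs (d 0%nat) + Rabs (d 1%nat) + Rabs (d 2%nat).
Proof.
  intros Hi. unfold matvec; simpl.
  rewrite (Rmult_comm (A i 0%nat)), (Rmult_comm (A i 1%nat)), (Rmult_comm (A i 2%nat)).
  assert (H := Rabs_lincomb3_le (d 0%nat) (d 1%nat) (d 2%nat) _ _ _ 1
                 (A_bounded i 0 Hi ltac:(lia)) (A_bounded i 1 Hi ltac:(lia))
                 (A_bounded i 2 Hi ltac:(lia))).
  lra.
Qed.

Lemma quad3_simplex_bound (a : nat -> R) : in_simplex 3 a -> Rabs (quad 3 A a) <= 1.
Proof.
  intros Ha. destruct (in_simplex3_coords a Ha) as (H0 & H1 & H2 & Hs).
  unfold quad; simpl.
  apply Rabs_convex3_le; auto; apply matvec3_simplex_bound; auto.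
Qed.

(* With d = a - b: the mean payoff is quadratic, quad a - quad b = <d, A a> + <b, A d>. *)
Lemma replicator_field3_inner_diff (a b : nat -> R) :
  let d := vsub a b in
  dot3 d (vsub (replicator_field 3 A a) (replicator_field 3 A b))
  = dot3 d (fun i => d i * matvec 3 A a i) + dot3 d (fun i => b i * matvec 3 A d i)
    - quad 3 A a * dot3 d d
    - dot3 d b * (dot3 d (matvec 3 A a) + dot3 b (matvec 3 A d)).
Proof. unfold dot3, vsub, replicator_field, quad, matvec; simpl; ring. Qed.

Lemma replicator_field3_one_sided_lipschitz (a b : nat -> R) :
  in_simplex 3 a -> in_simplex 3 b ->
  Rabs (dot3 (vsub a b) (vsub (replicator_field 3 A a) (replicator_field 3 A b)))
  <= 13 * dot3 (vsub a b) (vsub a b).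
Proof.
  intros Ha Hb. rewrite replicator_field3_inner_diff. set (d := vsub a b).
  destruct (in_simplex3_coords b Hb) as (Hb0 & Hb1 & Hb2 & Hbs).
  set (S := Rabs (d 0%nat) + Rabs (d 1%nat) + Rabs (d 2%nat)).
  assert (Hd : forall i, (i < 3)%nat -> Rabs (d i) <= S).
  { intros i Hi. unfold S. pose proof (Rabs_pos (d 0%nat)); pose proof (Rabs_pos (d 1%nat));
    pose proof (Rabs_pos (d 2%nat)). destruct i as [|[|[|]]]; [lra | lra | lra | lia]. }
  assert (Hb' : forall i, (i < 3)%nat -> Rabs (b i) <= 1).
  { intros i Hi. apply Rabs_le. destruct i as [|[|[|]]]; [lra | lra | lra | lia]. }
  assert (Hga : forall i, (i < 3)%nat -> Rabs (matvec 3 A a i) <= 1)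
    by (intros; apply matvec3_simplex_bound; auto).
  assert (Hgd : forall i, (i < 3)%nat -> Rabs (matvec 3 A d i) <= S)
    by (intros; apply matvec3_Rabs_le; auto).
  assert (T1 : Rabs (dot3 d (fun i => d i * matvec 3 A a i)) <= S * (S * 1))
    by (apply Rabs_lincomb3_le; apply Rabs_mult_le; auto).
  assert (T2 : Rabs (dot3 d (fun i => b i * matvec 3 A d i)) <= S * (1 * S))
    by (apply Rabs_lincomb3_le; apply Rabs_mult_le; auto).
  assert (T3 : Rabs (quad 3 A a * dot3 d d) <= 1 * dot3 d d).
  { assert (0 <= dot3 d d) by (unfold dot3; nra).
    apply Rabs_mult_le; [apply quad3_simplex_bound | rewrite Rabs_pos_eq]; auto with real. }
  assert (Tdb : Rabs (dot3 d b) <= S * 1) by (apply Rabs_lincomb3_le; auto).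
  assert (Tda : Rabs (dot3 d (matvec 3 A a)) <= S * 1) by (apply Rabs_lincomb3_le; auto).
  assert (Tbd : Rabs (dot3 b (matvec 3 A d)) <= S) by (apply Rabs_convex3_le; auto).
  assert (T4 : Rabs (dot3 d b * (dot3 d (matvec 3 A a) + dot3 b (matvec 3 A d)))
               <= S * 1 * (S * 1 + S)).
  { apply Rabs_mult_le; auto. eapply Rle_trans; [apply Rabs_triang | lra]. }
  assert (HS : S * S <= 3 * dot3 d d)
    by (pose proof (sum_Rabs3_sqr_le (d 0%nat) (d 1%nat) (d 2%nat)); unfold dot3, S in *; lra).
  apply Rabs_le_between in T1, T2, T3, T4. apply Rabs_le_between. lra.
Qed.

End ReplicatorField3.

Lemma Ubar_bounded (eps : R) : 0 <= eps <= 1 ->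
  forall i j, (i < 3)%nat -> (j < 3)%nat -> Rabs (Ubar eps i j) <= 1.
Proof.
  intros He i j Hi Hj. apply Rabs_le.
  destruct i as [|[|[|]]], j as [|[|[|]]]; simpl; lra || lia.
Qed.

Lemma nonincreasing_of_deriv_nonpos (h dh : R -> R) (a b : R) :
  (forall s, is_derive h s (dh s)) -> (forall s, dh s <= 0) -> a <= b -> h b <= h a.
Proof.
  intros Hd Hn Hab. destruct (Req_dec a b) as [<- | Hne]; [lra |].
  destruct (MVT_gen h a b dh) as [c [_ Hc]].
  - intros; apply Hd.
  - intros s _. apply continuity_pt_filterlim, (ex_derive_continuous h s).
    exists (dh s); apply Hd.
  - specialize (Hn c). nra.
Qed.

Lemma zero_of_deriv_bound_forward (e de : R -> R) (K : R) :
  (forall t, is_derive e t (de t)) -> (forall t, 0 <= e t) ->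
  (forall t, Rabs (de t) <= K * e t) -> e 0 = 0 -> forall t, 0 <= t -> e t = 0.
Proof.
  intros Hd Hnn Hb H0 t Ht.
  assert (Hdecr : e t * exp (- K * t) <= e 0 * exp (- K * 0)).
  { apply (nonincreasing_of_deriv_nonpos (fun s => e s * exp (- K * s))
             (fun s => de s * exp (- K * s) + e s * (- K * exp (- K * s))) 0 t); auto.
    - intros s. apply (is_derive_mult e (fun s => exp (- K * s))); auto.
      + auto_derive; auto; ring.
      + intros; apply Rmult_comm.
    - intros s. specialize (Hb s). apply Rabs_le_between in Hb.
      pose proof (exp_pos (- K * s)). nra. }
  rewrite H0 in Hdecr. pose proof (exp_pos (- K * t)). specialize (Hnn t). nra.
Qed.

Lemma zero_of_deriv_bound (e de : R -> R) (K : R) :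
  (forall t, is_derive e t (de t)) -> (forall t, 0 <= e t) ->
  (forall t, Rabs (de t) <= K * e t) -> e 0 = 0 -> forall t, e t = 0.
Proof.
  intros Hd Hnn Hb H0 t. destruct (Rle_or_lt 0 t) as [Ht | Ht].
  - exact (zero_of_deriv_bound_forward e de K Hd Hnn Hb H0 t Ht).
  - replace t with (- - t) by ring.
    apply (zero_of_deriv_bound_forward (fun s => e (- s)) (fun s => - de (- s)) K);
      auto; try lra.
    + intros s. replace (- de (- s)) with (scal (-1) (de (- s)))
        by (unfold scal; simpl; unfold mult; simpl; ring).
      apply (is_derive_comp e Ropp); [apply Hd | auto_derive; auto].
    + intros s. rewrite Rabs_Ropp. apply Hb.
    + rewrite Ropp_0; exact H0.
Qed.

Lemma is_derive_sum3 (x : R -> nat -> R) (dx : nat -> R) (t : R) :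
  (forall i, (i < 3)%nat -> is_derive (fun s => x s i) t (dx i)) ->
  is_derive (fun s => x s 0%nat + x s 1%nat + x s 2%nat) t (dx 0%nat + dx 1%nat + dx 2%nat).
Proof.
  intros Hx.
  apply (is_derive_plus (fun s => x s 0%nat + x s 1%nat) (fun s => x s 2%nat));
    [apply (is_derive_plus (fun s => x s 0%nat) (fun s => x s 1%nat)) |]; apply Hx; lia.
Qed.

Lemma is_derive_dot3_self (u du : R -> nat -> R) (t : R) :
  (forall i, (i < 3)%nat -> is_derive (fun s => u s i) t (du t i)) ->
  is_derive (fun s => dot3 (u s) (u s)) t (2 * dot3 (u t) (du t)).
Proof.
  intros Hu. unfold dot3.
  assert (Hsq : forall i, (i < 3)%nat ->
            is_derive (fun s => u s i * u s i) t (du t i * u t i + u t i * du t i))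
    by (intros i Hi; apply (is_derive_mult (fun s => u s i)); auto; intros; apply Rmult_comm).
  replace (2 * _) with ((du t 0%nat * u t 0%nat + u t 0%nat * du t 0%nat)
                        + (du t 1%nat * u t 1%nat + u t 1%nat * du t 1%nat)
                        + (du t 2%nat * u t 2%nat + u t 2%nat * du t 2%nat)) by ring.
  exact (is_derive_sum3 (fun s i => u s i * u s i) _ t Hsq).
Qed.

Lemma dot3_self_nonneg (u : nat -> R) : 0 <= dot3 u u.
Proof. unfold dot3. nra. Qed.

Lemma dot3_self_eq0 (u : nat -> R) : dot3 u u = 0 -> forall i, (i < 3)%nat -> u i = 0.
Proof.
  unfold dot3. intros H i Hi.
  destruct i as [|[|[|]]]; [nra | nra | nra | lia].
Qed.

Lemma rescaled_flow_unique (F : (nat -> R) -> nat -> R) (K : R) (lam : R -> R)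
    (w z : R -> nat -> R) :
  (forall a b, in_simplex 3 a -> in_simplex 3 b ->
     Rabs (dot3 (vsub a b) (vsub (F a) (F b))) <= K * dot3 (vsub a b) (vsub a b)) ->
  (forall t, Rabs (lam t) <= 1) ->
  (forall t, in_simplex 3 (w t)) -> (forall t, in_simplex 3 (z t)) ->
  (forall t i, (i < 3)%nat -> is_derive (fun s => w s i) t (lam t * F (w t) i)) ->
  (forall t i, (i < 3)%nat -> is_derive (fun s => z s i) t (lam t * F (z t) i)) ->
  (forall i, (i < 3)%nat -> w 0 i = z 0 i) ->
  forall t i, (i < 3)%nat -> w t i = z t i.
Proof.
  intros HF Hlam Hw Hz Hdw Hdz H0 t i Hi.
  set (e := fun s => dot3 (vsub (w s) (z s)) (vsub (w s) (z s))).
  set (de := fun s => 2 * (lam s * dot3 (vsub (w s) (z s)) (vsub (F (w s)) (F (z s))))).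
  assert (Hde : forall s, is_derive e s (de s)).
  { intros s. unfold e, de.
    replace (lam s * _) with (dot3 (vsub (w s) (z s))
                                (fun i => lam s * F (w s) i - lam s * F (z s) i))
      by (unfold dot3, vsub; ring).
    apply (is_derive_dot3_self (fun s => vsub (w s) (z s))
             (fun s i => lam s * F (w s) i - lam s * F (z s) i)).
    intros j Hj. apply (is_derive_minus (fun s => w s j) (fun s => z s j)); auto. }
  assert (Hbound : forall s, Rabs (de s) <= 2 * K * e s).
  { intros s. unfold de, e. rewrite !Rabs_mult, Rabs_pos_eq by lra.
    specialize (Hlam s). pose proof (Rabs_pos (lam s)).
    pose proof (HF _ _ (Hw s) (Hz s)).
    pose proof (Rabs_pos (dot3 (vsub (w s) (z s)) (vsub (F (w s)) (F (z s))))).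
    nra. }
  assert (He0 : e 0 = 0).
  { unfold e, dot3, vsub. rewrite !H0 by lia. ring. }
  apply Rminus_diag_uniq.
  apply (dot3_self_eq0 (vsub (w t) (z t))); auto.
  exact (zero_of_deriv_bound e de (2 * K) Hde (fun s => dot3_self_nonneg _) Hbound He0 t).
Qed.

Lemma is_derive_time_change (n : nat) (F : (nat -> R) -> nat -> R) (y : R -> nat -> R)
    (tau lam : R -> R) :
  (forall s i, (i < n)%nat -> is_derive (fun r => y r i) s (F (y s) i)) ->
  (forall t, is_derive tau t (lam t)) ->
  forall t i, (i < n)%nat ->
    is_derive (fun s => y (tau s) i) t (lam t * F (y (tau t)) i).
Proof.
  intros Hy Htau t i Hi.
  apply (is_derive_comp (fun r => y r i) tau); auto.
Qed.

Lemma is_derive_RInt_0 (f : R -> R) (t : R) :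
  (forall s, continuous f s) -> is_derive (fun u => RInt f 0 u) t (f t).
Proof.
  intros Hf. apply (is_derive_RInt f (fun u => RInt f 0 u) 0 t); auto.
  apply filter_forall. intros b. apply (RInt_correct (V := R_CompleteNormedModule)).
  apply ex_RInt_continuous. auto.
Qed.

Lemma Umat_top_rows (eps : R) (v : nat -> R) (i : nat) : (i < 3)%nat ->
  matvec 7 (Umat eps) v i
  = matvec 3 (Ubar eps) v i + (-10 * v 3%nat + (-1/3 + eps) * (v 4%nat + v 5%nat + v 6%nat)).
Proof. intros Hi. unfold matvec. destruct i as [|[|[|]]]; [simpl; ring .. | lia]. Qed.

Lemma is_derive_share3 (x : R -> nat -> R) (g : nat -> R) (q t : R) (i : nat) :
  (i < 3)%nat ->
  (forall j, (j < 3)%nat -> is_derive (fun s => x s j) t (x t j * (g j - q))) ->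
  x t 0%nat + x t 1%nat + x t 2%nat <> 0 ->
  let lam := x t 0%nat + x t 1%nat + x t 2%nat in
  is_derive (fun s => x s i / (x s 0%nat + x s 1%nat + x s 2%nat)) t
    (x t i / lam * (g i - dot3 (fun j => x t j / lam) g)).
Proof.
  intros Hi Hx Hlam lam.
  assert (Hsum : is_derive (fun s => x s 0%nat + x s 1%nat + x s 2%nat) t
            (x t 0%nat * (g 0%nat - q) + x t 1%nat * (g 1%nat - q) + x t 2%nat * (g 2%nat - q)))
    by (apply (is_derive_sum3 x (fun j => x t j * (g j - q))); auto).
  replace (x t i / lam * _) with
    ((x t i * (g i - q) * lam
      - x t i * (x t 0%nat * (g 0%nat - q) + x t 1%nat * (g 1%nat - q)
                 + x t 2%nat * (g 2%nat - q))) / lam ^ 2)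
    by (unfold lam, dot3 in *; field; exact Hlam).
  apply (is_derive_div (fun s => x s i)); auto.
Qed.

Lemma Umat_shares_replicator_field (eps : R) (v : nat -> R) (i : nat) : (i < 3)%nat ->
  let lam := v 0%nat + v 1%nat + v 2%nat in lam <> 0 ->
  v i / lam * (matvec 7 (Umat eps) v i - dot3 (fun j => v j / lam) (matvec 7 (Umat eps) v))
  = lam * replicator_field 3 (Ubar eps) (fun j => v j / lam) i.
Proof.
  intros Hi lam Hlam. unfold dot3. rewrite !Umat_top_rows by lia.
  unfold replicator_field, quad, matvec, lam in *.
  destruct i as [|[|[|]]]; [simpl; field; exact Hlam .. | lia].
Qed.

Lemma head3_sum_bounds (v : nat -> R) :
  in_simplex 7 v -> (forall i, (i < 7)%nat -> 0 < v i) ->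
  0 < v 0%nat + v 1%nat + v 2%nat <= 1.
Proof.
  intros [Hnn Hsum] Hpos. simpl in Hsum.
  assert (0 < v 0%nat /\ 0 < v 1%nat /\ 0 < v 2%nat) by (repeat split; apply Hpos; lia).
  assert (0 <= v 3%nat /\ 0 <= v 4%nat /\ 0 <= v 5%nat /\ 0 <= v 6%nat)
    by (repeat split; apply Hnn; lia).
  lra.
Qed.

Lemma head3_shares_in_simplex (v : nat -> R) :
  (forall i, (i < 3)%nat -> 0 < v i) ->
  in_simplex 3 (fun j => v j / (v 0%nat + v 1%nat + v 2%nat)).
Proof.
  intros Hpos.
  assert (0 < v 0%nat /\ 0 < v 1%nat /\ 0 < v 2%nat) by (repeat split; apply Hpos; lia).
  split.
  - intros j Hj. apply Rlt_le, Rdiv_lt_0_compat; [apply Hpos; lia | lra].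
  - simpl. field. lra.
Qed.

Theorem lemma3 :
  exists eps0 : R, 0 < eps0 /\
  forall eps : R, 0 < eps < eps0 ->
  forall x : R -> nat -> R,
    (forall t, in_simplex 7 (x t)) ->
    (forall t i, (i < 7)%nat -> 0 < x t i) ->
    replicator_solution 7 (Umat eps) x ->
    let lam := fun t => x t 0%nat + x t 1%nat + x t 2%nat in
    let xbar := fun t i => x t i / lam t in
    let taubar := fun t => RInt lam 0 t in
    (forall t i, (i < 3)%nat ->
       is_derive (fun s => xbar s i) t
         (lam t * (xbar t i * (matvec 3 (Ubar eps) (xbar t) i
                               - quad 3 (Ubar eps) (xbar t))))) /\
    (forall y : R -> nat -> R,
       (forall t, in_simplex 3 (y t)) ->
       replicator_solution 3 (Ubar eps) y ->
       (forall i, (i < 3)%nat -> y 0 i = xbar 0 i) ->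
       forall t i, (i < 3)%nat -> xbar t i = y (taubar t) i).
Proof.
  exists 1. split; [lra |].
  intros eps Heps x Hx Hpos Hrep lam xbar taubar.
  assert (Hlam : forall t, 0 < lam t <= 1) by (intros t; apply head3_sum_bounds; auto).
  assert (Hxbar : forall t i, (i < 3)%nat ->
            is_derive (fun s => xbar s i) t (lam t * replicator_field 3 (Ubar eps) (xbar t) i)).
  { intros t i Hi. specialize (Hlam t).
    unfold xbar, lam in *.
    rewrite <- Umat_shares_replicator_field by (auto; lra).
    apply (is_derive_share3 x _ (quad 7 (Umat eps) (x t)));
      [auto | intros j Hj; apply Hrep; lia | lra]. }
  split; [exact Hxbar |].
  intros y Hy Hyrep Hy0 t i Hi.
  apply (rescaled_flow_unique (replicator_field 3 (Ubar eps)) 13 lam xbar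
           (fun s => y (taubar s))); auto.
  - intros a b Ha Hb. apply replicator_field3_one_sided_lipschitz; auto.
    apply Ubar_bounded; lra.
  - intros s. specialize (Hlam s). rewrite Rabs_pos_eq; lra.
  - intros s. apply head3_shares_in_simplex. intros j Hj. apply Hpos. lia.
  - apply (is_derive_time_change 3); auto.
    intros s. apply is_derive_RInt_0. intros r.
    apply (ex_derive_continuous lam). eexists.
    apply is_derive_sum3. intros j Hj. apply Hrep. lia.
  - intros j Hj. unfold taubar. rewrite RInt_point. symmetry. auto.
Qed.
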